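(* If $M$ is an IC and IR mechanism that is left continuous, floor-randomized and satisfies DD, then $\theta\mapsto\mathrm{RS}_\alpha(\theta,M)$ is left continuous at every $\theta\in(\underline\theta,\overline\theta]$.
   Context: Setting. Let $\Theta=[\underline\theta,\overline\theta]$ with $0<\underline\theta<\overline\theta$. Let $c>0$ and let $P:\mathbb R_+\to\mathbb R_+$ be continuous and strictly decreasing with $P(\overline q)=0$ for some $\overline q>0$. Put $V(q)=\int_0^q P(z)\,dz$ and $\mathrm{TS}(\theta,q)=V(q)-c-\theta q$ for $q>0$, $\mathrm{TS}(\theta,0)=0$. Assume (A2): $\mathrm{TS}(\overline\theta,P^{-1}(\overline\theta))>0$. A mechanism is a triple $M=(r,q,u)$ of functions $r:\Theta\to[0,1]$, $q:\Theta\to[0,\overline q]$, $u:\Theta\to\mathbb R$ with $q(\theta)=0$ if and only if $r(\theta)=0$. It is IC if $u(\theta)\ge u(\theta')+(\theta'-\theta)q(\theta')r(\theta')$ for all $\theta,\theta'\in\Theta$, and IR if $u(\theta)\ge 0$ for all $\theta$. (Known fact: $M$ is IC iff $\theta\mapsto q(\theta)r(\theta)$ is nonincreasing and $u(\theta)=u(\overline\theta)+\int_\theta^{\overline\theta}q(z)r(z)\,dz$ for all $\theta$; an IC mechanism is IR iff $u(\overline\theta)\ge0$.) Fix $\alpha\in[0,1)$. The regulator's surplus at $\theta$ is $\mathrm{RS}_\alpha(\theta,M)=r(\theta)\,\mathrm{TS}(\theta,q(\theta))-(1-\alpha)u(\theta)$. The quantity floor $\hat q$ is the unique $q>0$ with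 $V(q)-qP(q)=c$. A mechanism $(r,q,u)$ is floor-randomized if it is IC, IR, $u(\overline\theta)=0$, and $\Theta$ can be partitioned into three pairwise disjoint (possibly empty) intervals $\Theta_1,\Theta_{01},\Theta_0$, with every element of $\Theta_0$ larger than every element of $\Theta_{01}$ and every element of $\Theta_{01}$ larger than every element of $\Theta_1$, such that: $q(\theta)\ge\hat q$ and $r(\theta)=1$ for $\theta\in\Theta_1$; $q(\theta)=\hat q$ and $r(\theta)\in(0,1)$ for $\theta\in\Theta_{01}$; $q(\theta)=r(\theta)=0$ for $\theta\in\Theta_0$. The efficient quantity is $q_e(\theta)=P^{-1}(\theta)$. A mechanism satisfies downward distortion (DD) if $q(\theta)\le q_e(\theta)$ for all $\theta$, with equality at $\theta=\underline\theta$. A mechanism is left continuous if $\theta\mapsto q(\theta)r(\theta)$ is left continuous at every $\theta\in(\underline\theta,\overline\theta]$. *)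

From Stdlib Require Import Reals.
From Coquelicot Require Import Coquelicot.
Open Scope R_scope.

Section Defs.
Variables (th_lo th_hi : R).

Definition inTheta (t : R) : Prop := th_lo <= t <= th_hi.

Definition V (P : R -> R) (x : R) : R := RInt P 0 x.

Definition TS (P : R -> R) (c t x : R) : R :=
  if Req_EM_T x 0 then 0 else V P x - c - t * x.

Definition is_mechanism (qbar : R) (r q u : R -> R) : Prop :=
  forall t, inTheta t ->
    (0 <= r t <= 1) /\ (0 <= q t <= qbar) /\ (q t = 0 <-> r t = 0).

Definition is_IC (r q u : R -> R) : Prop :=
  forall t t', inTheta t -> inTheta t' ->
    u t >= u t' + (t' - t) * q t' * r t'.

Definition is_IR (u : R -> R) : Prop := forall t, inTheta t -> u t >= 0.

Definition RS (P : R -> R) (c alpha : R) (r q u : R -> R) (t : R) : R :=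
  r t * TS P c t (q t) - (1 - alpha) * u t.

Definition is_qfloor (P : R -> R) (c qh : R) : Prop :=
  0 < qh /\ V P qh - qh * P qh = c.

Definition is_interval (I : R -> Prop) : Prop :=
  forall x y z, I x -> I y -> x <= z <= y -> I z.

Definition floor_randomized (qh : R) (r q u : R -> R) : Prop :=
  is_IC r q u /\ is_IR u /\ u th_hi = 0 /\
  exists T1 T01 T0 : R -> Prop,
    is_interval T1 /\ is_interval T01 /\ is_interval T0 /\
    (forall t, T1 t -> inTheta t) /\ (forall t, T01 t -> inTheta t) /\
    (forall t, T0 t -> inTheta t) /\
    (forall t, inTheta t -> T1 t \/ T01 t \/ T0 t) /\
    (forall t, ~ (T1 t /\ T01 t)) /\ (forall t, ~ (T1 t /\ T0 t)) /\
    (forall t, ~ (T01 t /\ T0 t)) /\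
    (forall x y, T01 x -> T0 y -> x < y) /\
    (forall x y, T1 x -> T01 y -> x < y) /\
    (forall t, T1 t -> qh <= q t /\ r t = 1) /\
    (forall t, T01 t -> q t = qh /\ 0 < r t < 1) /\
    (forall t, T0 t -> q t = 0 /\ r t = 0).

(* downward distortion: q(theta) <= q_e(theta) = P^{-1}(theta), with equality
   at th_lo; P^{-1}(theta) is the (unique) z >= 0 with P z = theta. *)
Definition DD (P : R -> R) (q : R -> R) : Prop :=
  (forall t z, inTheta t -> 0 <= z -> P z = t -> q t <= z) /\
  (forall z, 0 <= z -> P z = th_lo -> q th_lo = z).

Definition left_continuous_at (f : R -> R) (t : R) : Prop :=
  filterlim f (at_left t) (locally (f t)).

Definition mech_left_continuous (r q : R -> R) : Prop :=
  forall t, th_lo < t <= th_hi -> left_continuous_at (fun s => q s * r s) t.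

End Defs.

(* On a floor-randomized mechanism the regulator's surplus depends on the type t
   only through m = q r, t itself and the rent u: a type served with
   probability r at the floor quantity qh contributes
   r (V qh - c - t qh) = m P(qh) - t m, so in all three regimes
   RS = Phi(m) - t m - (1 - alpha) u for the single continuous function
   Phi(m) = V(max m qh) - c + (min m qh - qh) P(qh).
   m is left continuous by assumption, and incentive compatibility makes u
   Lipschitz with constant qbar. *)

From Stdlib Require Import Reals Lra.
From Coquelicot Require Import Coquelicot.
Open Scope R_scope.

Section FilterArithmetic.

Context {T : Type} (F : (T -> Prop) -> Prop) {FF : Filter F}.

Lemma filterlim_Rplus_fun (f g : T -> R) (a b : R) :
  filterlim f F (locally a) -> filterlim g F (locally b) ->
  filterlim (fun x => f x + g x) F (locally (a + b)).
Proof. intros Hf Hg; exact (filterlim_comp_2 _ _ _ Hf Hg (filterlim_plus a b)). Qed.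

Lemma filterlim_Rmult_fun (f g : T -> R) (a b : R) :
  filterlim f F (locally a) -> filterlim g F (locally b) ->
  filterlim (fun x => f x * g x) F (locally (a * b)).
Proof.
intros Hf Hg; exact (filterlim_comp_2 _ _ _ Hf Hg (@filterlim_mult R_AbsRing a b)).
Qed.

Lemma filterlim_Rminus_fun (f g : T -> R) (a b : R) :
  filterlim f F (locally a) -> filterlim g F (locally b) ->
  filterlim (fun x => f x - g x) F (locally (a - b)).
Proof.
intros Hf Hg; apply (filterlim_Rplus_fun f (fun x => - g x)); [exact Hf|].
exact (filterlim_comp _ _ _ _ _ _ _ _ Hg (@filterlim_opp _ _ b)).
Qed.

End FilterArithmetic.

Lemma continuous_nonexpansive (f : R -> R) (x : R) :
  (forall y z, Rabs (f y - f z) <= Rabs (y - z)) -> continuous f x.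
Proof.
intros Hf; apply filterlim_locally; intros eps; exists eps; intros y Hy.
exact (Rle_lt_trans _ _ _ (Hf y x) Hy).
Qed.

Lemma Rmax_nonexpansive (a x y : R) : Rabs (Rmax x a - Rmax y a) <= Rabs (x - y).
Proof.
unfold Rmax; destruct (Rle_dec x a), (Rle_dec y a); apply Rabs_le; split_Rabs; lra.
Qed.

Lemma Rmin_nonexpansive (a x y : R) : Rabs (Rmin x a - Rmin y a) <= Rabs (x - y).
Proof.
unfold Rmin; destruct (Rle_dec x a), (Rle_dec y a); apply Rabs_le; split_Rabs; lra.
Qed.

Lemma left_continuous_of_lipschitz (f : R -> R) (K a t : R) :
  0 <= K -> a < t ->
  (forall s, a < s <= t -> Rabs (f s - f t) <= K * Rabs (s - t)) ->
  filterlim f (at_left t) (locally (f t)).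
Proof.
intros HK Hat Hf; apply filterlim_locally; intros eps.
assert (Hd : 0 < Rmin (eps / (K + 1)) (t - a)).
{ apply Rmin_glb_lt; [apply Rdiv_lt_0_compat; [apply cond_pos | lra] | lra]. }
exists (mkposreal _ Hd); intros s Hs Hst.
change (Rabs (s - t) < Rmin (eps / (K + 1)) (t - a)) in Hs.
change (Rabs (f s - f t) < eps).
assert (Hs_eps : Rabs (s - t) < eps / (K + 1)) by exact (Rlt_le_trans _ _ _ Hs (Rmin_l _ _)).
assert (Hs_a : Rabs (s - t) < t - a) by exact (Rlt_le_trans _ _ _ Hs (Rmin_r _ _)).
rewrite Rabs_left in Hs_a by lra.
apply (Rle_lt_trans _ _ _ (Hf s ltac:(lra))).
apply (Rle_lt_trans _ (K * (eps / (K + 1)))).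
- apply Rmult_le_compat_l; lra.
- assert (0 < eps) by apply cond_pos.
  apply (Rmult_lt_reg_r (K + 1)); [lra|]; field_simplify; nra.
Qed.

Lemma continuous_V (P : R -> R) (x : R) :
  (forall y, continuous P y) -> continuous (V P) x.
Proof.
intros HP; apply (@ex_derive_continuous R_AbsRing R_NormedModule).
exists (P x); apply (is_derive_RInt P (RInt P 0) 0 x); [|apply HP].
apply filter_forall; intros b; apply (@RInt_correct R_CompleteNormedModule).
apply (@ex_RInt_continuous R_CompleteNormedModule); intros; apply HP.
Qed.

Definition floor_surplus (P : R -> R) (c qh m : R) : R :=
  V P (Rmax m qh) - c + (Rmin m qh - qh) * P qh.

Lemma continuous_floor_surplus (P : R -> R) (c qh m : R) :
  (forall y, continuous P y) -> continuous (floor_surplus P c qh) m.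
Proof.
intros HP; unfold floor_surplus.
apply (continuous_plus (fun x => V P (Rmax x qh) - c)).
- apply (continuous_plus (fun x => V P (Rmax x qh))); [|apply continuous_const].
  apply (continuous_comp (fun x => Rmax x qh)).
  + apply continuous_nonexpansive, Rmax_nonexpansive.
  + apply continuous_V, HP.
- apply (continuous_mult (fun x => Rmin x qh - qh)); [|apply continuous_const].
  apply (continuous_plus (fun x => Rmin x qh)); [|apply continuous_const].
  apply continuous_nonexpansive, Rmin_nonexpansive.
Qed.

Lemma RS_floor_randomized (th_lo th_hi c alpha qh : R) (P r q u : R -> R) (s : R) :
  is_qfloor P c qh -> floor_randomized th_lo th_hi qh r q u ->
  inTheta th_lo th_hi s ->
  RS P c alpha r q u s =
  floor_surplus P c qh (q s * r s) - s * (q s * r s) - (1 - alpha) * u s.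
Proof.
intros [Hqh_pos Hqh] [_ [_ [_ [T1 [T01 [T0 Hpart]]]]]] Hs.
destruct Hpart as [_ [_ [_ [_ [_ [_ [Hcover [_ [_ [_ [_ [_ [H1 [H01 H0]]]]]]]]]]]]]].
unfold RS, TS, floor_surplus.
destruct (Hcover s Hs) as [Hs1 | [Hs01 | Hs0]].
- destruct (H1 s Hs1) as [Hq Hr]; rewrite Hr, Rmult_1_r.
  rewrite Rmax_left, Rmin_right by lra.
  destruct (Req_EM_T (q s) 0); [lra | ring].
- destruct (H01 s Hs01) as [Hq Hr]; rewrite Hq.
  rewrite Rmax_right, Rmin_left by nra.
  destruct (Req_EM_T qh 0); [lra|].
  rewrite <- Hqh; ring.
- destruct (H0 s Hs0) as [Hq Hr]; rewrite Hq, Hr, Rmult_0_r.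
  rewrite Rmax_right, Rmin_left by lra.
  destruct (Req_EM_T 0 0); [|lra].
  rewrite <- Hqh; ring.
Qed.

Lemma IC_rent_lipschitz (th_lo th_hi qbar : R) (r q u : R -> R) (s t : R) :
  is_mechanism th_lo th_hi qbar r q u -> is_IC th_lo th_hi r q u ->
  inTheta th_lo th_hi s -> inTheta th_lo th_hi t ->
  Rabs (u s - u t) <= qbar * Rabs (s - t).
Proof.
intros Hm HIC Hs Ht.
destruct (Hm s Hs) as [[Hrs0 Hrs1] [[Hqs0 Hqs1] _]].
destruct (Hm t Ht) as [[Hrt0 Hrt1] [[Hqt0 Hqt1] _]].
assert (Hms : 0 <= q s * r s <= qbar) by (split; nra).
assert (Hmt : 0 <= q t * r t <= qbar) by (split; nra).
pose proof (HIC s t Hs Ht) as Hst; pose proof (HIC t s Ht Hs) as Hts.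
rewrite Rmult_assoc in Hst, Hts.
apply Rabs_le; destruct (Rle_dec s t).
- rewrite (Rabs_left1 (s - t)) by lra; split; nra.
- rewrite (Rabs_right (s - t)) by lra; split; nra.
Qed.

Theorem lemma10
  (th_lo th_hi c qbar alpha qh : R) (P r q u : R -> R)
  (Hth : 0 < th_lo < th_hi) (Hc : 0 < c)
  (HPcont : forall x, continuous P x)
  (HPdec : forall x y, 0 <= x -> x < y -> P y < P x)
  (Hqbar : 0 < qbar) (HPqbar : P qbar = 0)
  (HA2 : exists z, 0 <= z /\ P z = th_hi /\ TS P c th_hi z > 0)
  (Halpha : 0 <= alpha < 1)
  (Hqh : is_qfloor P c qh)
  (Hmech : is_mechanism th_lo th_hi qbar r q u)
  (HIC : is_IC th_lo th_hi r q u) (HIR : is_IR th_lo th_hi u)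
  (Hlc : mech_left_continuous th_lo th_hi r q)
  (Hfr : floor_randomized th_lo th_hi qh r q u)
  (HDD : DD th_lo th_hi P q) :
  forall t, th_lo < t <= th_hi ->
    left_continuous_at (RS P c alpha r q u) t.
Proof.
intros t Ht.
assert (HTheta : forall s, th_lo < s <= t -> inTheta th_lo th_hi s)
  by (intros s Hs; unfold inTheta; lra).
assert (Hm : filterlim (fun s => q s * r s) (at_left t) (locally (q t * r t)))
  by exact (Hlc t Ht).
assert (Hid : filterlim (fun s => s) (at_left t) (locally t)).
{ apply filterlim_locally; intros eps; exists eps; intros s Hs _; exact Hs. }
assert (Hrent : filterlim u (at_left t) (locally (u t))).
{ apply (left_continuous_of_lipschitz u qbar th_lo); [lra | lra |].
  intros s Hs; apply (IC_rent_lipschitz th_lo th_hi qbar r q u s t Hmech HIC);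
    apply HTheta; lra. }
assert (HRS_near : at_left t (fun s => floor_surplus P c qh (q s * r s)
                     - s * (q s * r s) - (1 - alpha) * u s = RS P c alpha r q u s)).
{ assert (Hd : 0 < t - th_lo) by lra.
  exists (mkposreal _ Hd); intros s Hs Hst.
  change (Rabs (s - t) < t - th_lo) in Hs; rewrite Rabs_left in Hs by lra.
  symmetry; apply (RS_floor_randomized th_lo th_hi); [exact Hqh | exact Hfr | apply HTheta; lra]. }
unfold left_continuous_at.
rewrite (RS_floor_randomized th_lo th_hi c alpha qh P r q u t Hqh Hfr (HTheta t ltac:(lra))).
apply (filterlim_ext_loc _ _ HRS_near).
apply (filterlim_Rminus_fun (at_left t)); [apply (filterlim_Rminus_fun (at_left t))|].
- exact (filterlim_comp _ _ _ _ _ _ _ _ Hm (continuous_floor_surplus P c qh _ HPcont)).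
- exact (filterlim_Rmult_fun (at_left t) _ _ _ _ Hid Hm).
- exact (filterlim_Rmult_fun (at_left t) _ _ _ _ (filterlim_const _) Hrent).
Qed.
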